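(* Let $G=(V,E)$ be a connected graph with $n$ vertices, $\tau$ a set of types with $|\tau|>1$, $f:\tau\to\mathbb{Q}_{\ge1}$ a fitness function, and $M_0\in\Omega_0(G,\tau)$. Suppose the types in $\tau$ have $k$ distinct fitnesses $f_1<f_2<\dots<f_k$. For $i\in\{1,\dots,k\}$ let $\ell_i=|f^{-1}(f_i)|$ and $\ell=\max_i\ell_i$. Then: (1) $\mathbb{E}(A(G,\tau,f,M_0))\le(\ell-1)n^6+\sum_{i=2}^k\frac{f_i}{f_i-f_{i-1}}(n+1)n^3$; (2) for every $j\in\{2,\dots,k\}$ and every type $\beta$ with $f(\beta)=f_j$, $\mathbb{E}(A_\beta(G,\tau,f,M_0))\le(\ell_j-1)n^6+\sum_{i=j}^k\frac{f_i}{f_i-f_{i-1}}(n+1)n^3$; (3) for every type $\beta$ with $f(\beta)=f_1$, $\mathbb{E}(A_\beta(G,\tau,f,M_0))\le(\ell_1-1)n^6+\sum_{i=2}^k\frac{f_i}{f_i-f_{i-1}}(n+1)n^3$.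
   Context: For $G=(V,E)$, $N(v)$ is the neighbourhood of $v$. For a state $S:V\to\tau$, $S|_{v\to w}$ equals $S$ except $w$ gets type $S(v)$. The Moran process $M(G,\tau,f,M_0)$: Markov chain on states from $M_0$; given $M_t$, choose $v$ with probability $f(M_t(v))/\sum_uf(M_t(u))$, then $w\in N(v)$ uniformly, set $M_{t+1}=M_t|_{v\to w}$. $V_j(t)=\{v:M_t(v)=j\}$. $\Omega_0(G,\tau)$ is the set of states $V\to\tau$ with range $\tau$. Absorption time of type $j$: $A_j(G,\tau,f,M_0)=\min\{t\in\mathbb{Z}_{\ge0}:V_j(t)=V\text{ or }V_j(t)=\emptyset\}$. Total absorption time: $A(G,\tau,f,M_0)=\min\{t\in\mathbb{Z}_{\ge0}: V_j(t)=V\text{ for some }j\in\tau\}$. *)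

From HB Require Import structures.
From mathcomp Require Import all_boot all_order all_algebra.
From mathcomp Require Import all_classical all_reals all_analysis.
Set Implicit Arguments. Unset Strict Implicit. Unset Printing Implicit Defensive.
Import Order.TTheory GRing.Theory Num.Theory.
Local Open Scope ring_scope.

Section Moran.
Variables (R : realType) (V tau : finType) (adj : rel V) (f : tau -> rat).

Definition state := {ffun V -> tau}.

Definition nbhd (v : V) : {set V} := [set w | adj v w].

Definition upd (S : state) (v w : V) : state :=
  [ffun x => if x == w then S v else S x].

Definition fitR (j : tau) : R := ratr (f j).
Definition totfit (S : state) : R := \sum_(u : V) fitR (S u).

Definition trans (S S' : state) : R :=
  \sum_(v : V) \sum_(w in nbhd v)
     (if S' == upd S v w then fitR (S v) / totfit S / (#|nbhd v|)%:R else 0).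

(* qdist T M0 t S = P(M_t = S and M_s \notin T for all s <= t) *)
Fixpoint qdist (T : pred state) (M0 : state) (t : nat) (S : state) : R :=
  match t with
  | 0 => if (S == M0) && ~~ T S then 1 else 0
  | t'.+1 => if T S then 0 else \sum_(S0 : state) qdist T M0 t' S0 * trans S0 S
  end.

Definition surv (T : pred state) (M0 : state) (t : nat) : R :=
  \sum_(S : state) qdist T M0 t S.

(* E(hitting time of T) = sum_{t >= 0} P(hit > t), in the extended reals *)
Definition exp_hit (T : pred state) (M0 : state) : \bar R :=
  (\sum_(t <oo) (surv T M0 t)%:E)%E.

Definition total_abs : pred state := fun S => [exists j, [forall v, S v == j]].
Definition type_abs (j : tau) : pred state :=
  fun S => [forall v, S v == j] || [forall v, S v != j].

Definition absA (M0 : state) : \bar R := exp_hit total_abs M0.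
Definition absAj (j : tau) (M0 : state) : \bar R := exp_hit (type_abs j) M0.

End Moran.

Definition in_Omega0 (V tau : finType) (S : {ffun V -> tau}) : Prop :=
  forall j : tau, exists v : V, S v = j.

Definition simple_graph (V : finType) (adj : rel V) : Prop :=
  symmetric adj /\ irreflexive adj.

Definition connected_graph (V : finType) (adj : rel V) : Prop :=
  forall u v : V, connect adj u v.

(* the distinct fitness values, increasing: f_1 < ... < f_k, stored 0-indexed *)
Definition fitvals (tau : finType) (f : tau -> rat) : seq rat :=
  sort <=%R (undup [seq f x | x <- enum tau]).
Definition nfit (tau : finType) (f : tau -> rat) : nat := size (fitvals f).
(* fv f i = f_{i+1} *)
Definition fv (tau : finType) (f : tau -> rat) (i : nat) : rat := nth 0 (fitvals f) i.
Definition ell (tau : finType) (f : tau -> rat) (i : nat) : nat :=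
  #|[set x | f x == fv f i]|.
Definition ellmax (tau : finType) (f : tau -> rat) : nat :=
  \max_(i < nfit f) ell f i.

(* Additive drift: a nonnegative potential whose expected value drops by at
   least 1 per step at every unabsorbed state bounds the expected absorption
   time by its initial value.  Weighting each vertex by the inverse of its
   degree turns the weighted count of any set of types into a martingale under
   neutral drift, and into a submartingale for the types of fitness at least
   f_i.  While all present types share one fitness, n^4/2 times the gap
   between (sum of weights)^2 and the sum of squared weighted counts is such a
   potential, of size at most n^6/2.  Otherwise the highest present level t
   has a boundary edge, across which the weighted count of levels >= t gains
   at least (f_t - f_(t-1)) / (n^3 f_t) per step; so the sum over i of
   n^3 f_i / (f_i - f_(i-1)) times the weight outside levels >= i is a
   potential, and the total weight is at most n. *)

From HB Require Import structures.
From mathcomp Require Import all_boot all_order all_algebra.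
From mathcomp Require Import all_classical all_reals all_analysis.
From mathcomp Require Import lra ring.
Import Order.TTheory GRing.Theory Num.Theory.
Set Implicit Arguments. Unset Strict Implicit. Unset Printing Implicit Defensive.
Local Open Scope ring_scope.

Section Drift.
Variables (R : realType) (V tau : finType) (adj : rel V) (f : tau -> rat).
Hypothesis f_ge0 : forall x, 0 <= f x.

Local Notation st := (state V tau).
Local Notation trans := (trans R adj f).
Local Notation qdist := (qdist R adj f).
Local Notation surv := (surv R adj f).

Definition deg (x : V) : R := (#|nbhd adj x|)%:R.
Definition step_prob (S : st) (v : V) : R := fitR R f (S v) / totfit R f S / deg v.
Definition next_mean (P : st -> R) (S : st) : R :=
  \sum_v \sum_(w in nbhd adj v) step_prob S v * P (upd S v w).

Lemma fitR_ge0 j : 0 <= fitR R f j.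
Proof. by rewrite /fitR ler0q. Qed.

Lemma totfit_ge0 (S : st) : 0 <= totfit R f S.
Proof. by apply: sumr_ge0 => u _; apply: fitR_ge0. Qed.

Lemma step_prob_ge0 (S : st) v : 0 <= step_prob S v.
Proof.
by apply: divr_ge0; [apply: divr_ge0; [apply: fitR_ge0 | apply: totfit_ge0] | apply: ler0n].
Qed.

Lemma trans_ge0 (S S' : st) : 0 <= trans S S'.
Proof.
apply: sumr_ge0 => v _; apply: sumr_ge0 => w _; case: ifP => // _.
exact: step_prob_ge0.
Qed.

Lemma sum_trans_mulr (P : st -> R) (S : st) : \sum_S' trans S S' * P S' = next_mean P S.
Proof.
rewrite /trans /next_mean.
under eq_bigr do rewrite big_distrl /=.
rewrite exchange_big /=; apply: eq_bigr => v _.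
under eq_bigr do rewrite big_distrl /=.
rewrite exchange_big /=; apply: eq_bigr => w _.
rewrite (bigD1 (upd S v w)) //= eqxx big1 ?addr0 // => S' /negbTE ->.
by rewrite mul0r.
Qed.

Lemma qdist_ge0 (T : pred st) (M0 : st) t S : 0 <= qdist T M0 t S.
Proof.
elim: t S => [|t IH] S /=; first by case: ifP.
case: ifP => // _; apply: sumr_ge0 => S0 _.
by rewrite mulr_ge0 ?IH ?trans_ge0.
Qed.

Lemma qdist_target (T : pred st) (M0 : st) t S : T S -> qdist T M0 t S = 0.
Proof. by case: t => [|t] /= ->; rewrite ?andbF. Qed.

Section Potential.
Variables (T : pred st) (P : st -> R) (M0 : st).
Hypothesis P_ge0 : forall S, 0 <= P S.
Hypothesis P_drift : forall S, ~~ T S -> next_mean P S <= P S - 1.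

Let mean_pot t := \sum_S qdist T M0 t S * P S.

Lemma mean_pot_succ t : mean_pot t.+1 <= mean_pot t - surv T M0 t.
Proof.
rewrite /mean_pot /=.
apply: (@le_trans _ _ (\sum_S' (\sum_S qdist T M0 t S * trans S S') * P S')).
  apply: ler_sum => S' _; case: ifP => // _.
  by rewrite mul0r mulr_ge0 // sumr_ge0 // => S _; rewrite mulr_ge0 ?qdist_ge0 ?trans_ge0.
rewrite (eq_bigr (fun S' => \sum_S qdist T M0 t S * trans S S' * P S')); last first.
  by move=> S' _; rewrite mulr_suml.
rewrite exchange_big /= /surv -sumrB; apply: ler_sum => S _.
under eq_bigr do rewrite -mulrA.
rewrite -big_distrr /= sum_trans_mulr.
have [TS|nTS] := boolP (T S); first by rewrite qdist_target // !mul0r subr0.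
rewrite -[X in _ - X](mulr1 (qdist T M0 t S)) -mulrBr.
by rewrite ler_wpM2l ?qdist_ge0 ?P_drift.
Qed.

Lemma exp_hit_le_potential : (exp_hit R adj f T M0 <= (P M0)%:E)%E.
Proof.
have mean_pot_ge0 t : 0 <= mean_pot t.
  by apply: sumr_ge0 => S _; rewrite mulr_ge0 ?qdist_ge0.
have telescope N : \sum_(0 <= t < N) surv T M0 t <= mean_pot 0 - mean_pot N.
  elim: N => [|N IH]; first by rewrite big_nil subrr.
  by rewrite big_nat_recr //=; have := mean_pot_succ N; lra.
have mean_pot0 : mean_pot 0 <= P M0.
  rewrite /mean_pot (bigD1 M0) //= eqxx big1 ?addr0.
    by case: (T M0); rewrite /= ?mul0r ?mul1r.
  by move=> S /negbTE ->; rewrite mul0r.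
apply: lime_le.
  apply: is_cvg_nneseries => t _ _.
  by rewrite lee_fin sumr_ge0 // => S _; apply: qdist_ge0.
apply: nearW => N; rewrite sumEFin lee_fin.
by have := telescope N; have := mean_pot_ge0 N; lra.
Qed.

End Potential.
End Drift.

Lemma connected_cut_edge (V : finType) (adj : rel V) (P : pred V) u v :
  connected_graph adj -> P u -> ~~ P v -> exists x y, [&& adj x y, P x & ~~ P y].
Proof.
move=> conn Pu nPv; move: (conn u v) => /connectP [p pth vE].
elim: p u pth Pu vE => [|y p IH] u /=; first by move=> _ Pu vE; move: nPv; rewrite vE Pu.
move=> /andP [auy py] Pu vE.
have [Py|nPy] := boolP (P y); first exact: IH py Py vE.
by exists u, y; rewrite auy Pu nPy.
Qed.

Section Levels.
Variables (tau : finType) (f : tau -> rat).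
Local Notation k := (nfit f).

Definition level (q : rat) : nat := index q (fitvals f).

Lemma mem_fitvals x : f x \in fitvals f.
Proof. by rewrite /fitvals mem_sort mem_undup map_f // mem_enum. Qed.

Lemma fitvals_sorted : sorted <%O (fitvals f).
Proof. by rewrite /fitvals sort_lt_sorted undup_uniq. Qed.

Lemma fv_level x : fv f (level (f x)) = f x.
Proof. by rewrite /fv /level nth_index // mem_fitvals. Qed.

Lemma level_lt x : (level (f x) < k)%N.
Proof. by rewrite /level index_mem mem_fitvals. Qed.

Lemma level_fv j : (j < k)%N -> level (fv f j) = j.
Proof. by move=> jk; rewrite /level /fv index_uniq // /fitvals sort_uniq undup_uniq. Qed.

Lemma fv_leq i j : (i < k)%N -> (j < k)%N -> (fv f i <= fv f j) = (i <= j)%N.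
Proof. by move=> ik jk; rewrite /fv (lt_sorted_leq_nth 0 fitvals_sorted). Qed.

Lemma fv_ltn i j : (i < k)%N -> (j < k)%N -> (fv f i < fv f j) = (i < j)%N.
Proof. by move=> ik jk; rewrite ltNge fv_leq // ltnNge. Qed.

Lemma fv_attained i : (i < k)%N -> exists x, f x = fv f i.
Proof.
move=> ik; have : fv f i \in fitvals f by rewrite /fv mem_nth.
by rewrite /fitvals mem_sort mem_undup => /mapP [x _ ->]; exists x.
Qed.

Lemma ell_gt0 i : (i < k)%N -> (0 < ell f i)%N.
Proof.
by move=> /fv_attained [x fx]; apply/card_gt0P; exists x; rewrite inE fx.
Qed.

Lemma ell_le_max i : (i < k)%N -> (ell f i <= ellmax f)%N.
Proof. by move=> ik; apply: (@leq_bigmax _ (fun i : 'I_k => ell f i) (Ordinal ik)). Qed.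

End Levels.

Section Moran.
Variables (R : realType) (V tau : finType) (adj : rel V) (f : tau -> rat).
Hypothesis f_ge1 : forall x, 1 <= f x.
Hypothesis adj_sym : symmetric adj.
Hypothesis adj_irr : irreflexive adj.
Hypothesis adj_conn : connected_graph adj.
Hypothesis card_V_gt1 : (1 < #|V|)%N.

Local Notation st := (state V tau).
Local Notation deg := (deg R adj).
Local Notation fit S x := (fitR R f (S x)).
Local Notation W := (totfit R f).
Local Notation step_prob := (step_prob R adj f).
Local Notation next_mean := (@next_mean R V tau adj f).
Local Notation n := (#|V|%:R : R).

Lemma f_ge0 x : 0 <= f x.
Proof. exact: le_trans (f_ge1 x). Qed.

Lemma card_gt0 : 0 < n.
Proof. by rewrite ltr0n; apply: leq_trans card_V_gt1. Qed.

Lemma nbhd_card_gt0 x : (0 < #|nbhd adj x|)%N.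
Proof.
have [y yx] : exists y, y != x.
  move/card_gt1P: card_V_gt1 => [a [b [_ _ ab]]].
  have [ax|ax] := eqVneq a x; last by exists a.
  by exists b; rewrite -ax eq_sym.
have [a [b /and3P [ab /eqP ax nb]]] :=
  @connected_cut_edge _ _ (pred1 x) x y adj_conn (eqxx x) yx.
by apply/card_gt0P; exists b; rewrite inE -ax.
Qed.

Lemma deg_gt0 x : 0 < deg x.
Proof. by rewrite ltr0n nbhd_card_gt0. Qed.

Definition dinv (x : V) : R := (deg x)^-1.

Lemma dinv_gt0 x : 0 < dinv x.
Proof. by rewrite invr_gt0 deg_gt0. Qed.

Lemma dinv_le1 x : dinv x <= 1.
Proof. by rewrite invf_le1 ?deg_gt0 // ler1n nbhd_card_gt0. Qed.

Lemma dinv_ge_inv_card x : n^-1 <= dinv x.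
Proof. by rewrite lef_pV2 ?posrE ?deg_gt0 ?card_gt0 // ler_nat max_card. Qed.

Lemma fitR_ge1 j : 1 <= fitR R f j.
Proof. by rewrite /fitR -(rmorph1 (ratr : rat -> R)) ler_rat f_ge1. Qed.

Lemma totfit_gt0 (S : st) : 0 < W S.
Proof.
apply: (@lt_le_trans _ _ (\sum_(u : V) (1 : R))); first by rewrite sumr_const card_gt0.
by apply: ler_sum => u _; apply: fitR_ge1.
Qed.

Lemma sum_step_prob (S : st) : \sum_v \sum_(w in nbhd adj v) step_prob S v = 1.
Proof.
under eq_bigr do rewrite sumr_const.
rewrite -[RHS](divff (lt0r_neq0 (totfit_gt0 S))) /totfit mulr_suml.
apply: eq_bigr => v _; rewrite /step_prob -mulr_natr -/(deg v) mulfVK //.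
exact: lt0r_neq0 (deg_gt0 v).
Qed.

Lemma sum_nbhd_sym (h : V -> V -> R) :
  \sum_v \sum_(w in nbhd adj v) h v w = \sum_v \sum_(w in nbhd adj v) h w v.
Proof.
under eq_bigr do rewrite big_mkcond /=.
under [RHS]eq_bigr do rewrite big_mkcond /=.
rewrite exchange_big /=; apply: eq_bigr => v _; apply: eq_bigr => w _.
by rewrite !inE adj_sym.
Qed.

Lemma ler_sum_nbhd (h : V -> V -> R) u w : adj u w -> (forall v w, 0 <= h v w) ->
  h u w <= \sum_v \sum_(w in nbhd adj v) h v w.
Proof.
move=> auw h_ge0; rewrite (bigD1 u) //= (bigD1 w) ?inE //= -addrA lerDl.
by rewrite addr_ge0 ?sumr_ge0 // => v _; rewrite sumr_ge0.
Qed.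

Lemma ler_sum_nbhd2 (h : V -> V -> R) u w : adj u w -> (forall v w, 0 <= h v w) ->
  h u w + h w u <= \sum_v \sum_(w in nbhd adj v) h v w.
Proof.
move=> auw h_ge0.
have uw : u != w by apply: contraTneq auw => ->; rewrite adj_irr.
have inner x y : adj x y -> h x y <= \sum_(z in nbhd adj x) h x z.
  by move=> axy; rewrite (bigD1 y) ?inE //= lerDl sumr_ge0.
rewrite (bigD1 u) //= [\sum_(v | v != u) _](bigD1 w) 1?eq_sym //= addrA.
rewrite -[X in X <= _]addr0.
apply: lerD; first by apply: lerD; apply: inner; rewrite // adj_sym.
by apply: sumr_ge0 => v _; apply: sumr_ge0.
Qed.

Definition drift (P : st -> R) (S : st) : R :=
  \sum_v \sum_(w in nbhd adj v) step_prob S v * (P (upd S v w) - P S).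

Lemma next_meanE (P : st -> R) (S : st) : next_mean P S = P S + drift P S.
Proof.
have E : \sum_v \sum_(w in nbhd adj v) step_prob S v * P S = P S.
  by under eq_bigr do rewrite -mulr_suml; rewrite -mulr_suml sum_step_prob mul1r.
rewrite -[X in _ = X + _]E /drift -big_split /=; apply: eq_bigr => v _.
by rewrite -big_split /=; apply: eq_bigr => w _; ring.
Qed.

Lemma ler_next_mean (P Q : st -> R) (S : st) :
  (forall v w, P (upd S v w) <= Q (upd S v w)) -> next_mean P S <= next_mean Q S.
Proof.
move=> PQ; apply: ler_sum => v _; apply: ler_sum => w _.
by rewrite ler_wpM2l // step_prob_ge0 // => x; apply: f_ge0.
Qed.

Lemma eq_drift (P Q : st -> R) (S : st) : P =1 Q -> drift P S = drift Q S.
Proof. by move=> PQ; apply: eq_bigr => v _; apply: eq_bigr => w _; rewrite !PQ. Qed.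

Lemma driftZD (P : st -> R) a b (S : st) :
  drift (fun S' => a * P S' + b) S = a * drift P S.
Proof.
rewrite /drift mulr_sumr; apply: eq_bigr => v _.
by rewrite mulr_sumr; apply: eq_bigr => w _; ring.
Qed.

Lemma drift_sum (I : Type) (r : seq I) (c : I -> R) (Q : I -> st -> R) (S : st) :
  drift (fun S' => \sum_(i <- r) c i * Q i S') S = \sum_(i <- r) c i * drift (Q i) S.
Proof.
rewrite /drift.
under [RHS]eq_bigr do rewrite mulr_sumr.
rewrite [RHS]exchange_big /=; apply: eq_bigr => v _.
under [RHS]eq_bigr do rewrite mulr_sumr.
rewrite [RHS]exchange_big /=; apply: eq_bigr => w _.
by rewrite -sumrB mulr_sumr; apply: eq_bigr => i _; ring.
Qed.

Definition dsum (g : tau -> R) (S : st) : R := \sum_x g (S x) * dinv x.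

Lemma dsum_upd g (S : st) v w :
  dsum g (upd S v w) = dsum g S + (g (S v) - g (S w)) * dinv w.
Proof.
rewrite /dsum (bigD1 w) //= [in RHS](bigD1 w) //= ffunE eqxx.
rewrite (eq_bigr (fun x => g (S x) * dinv x)); first by ring.
by move=> x /negbTE xw; rewrite ffunE xw.
Qed.

(* Summing each edge in both directions makes the drift of a degree-weighted
   count a symmetric form, whose terms are products of fitness and [g] gaps. *)
Lemma drift_dsum g (S : st) : 2 * drift (dsum g) S =
  (\sum_v \sum_(w in nbhd adj v)
     (fit S v - fit S w) * (g (S v) - g (S w)) * dinv v * dinv w) / W S.
Proof.
pose h v w := fit S v * dinv v * dinv w * (g (S v) - g (S w)).
have -> : drift (dsum g) S = (\sum_v \sum_(w in nbhd adj v) h v w) / W S.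
  rewrite mulr_suml; apply: eq_bigr => v _; rewrite mulr_suml.
  by apply: eq_bigr => w _; rewrite dsum_upd addrC addKr /step_prob /h /dinv; ring.
rewrite mulrA; congr (_ / _).
rewrite mulr2n mulrDl mul1r {2}sum_nbhd_sym -big_split /=; apply: eq_bigr => v _.
by rewrite -big_split /=; apply: eq_bigr => w _; rewrite /h; ring.
Qed.

Section Comonotone.
Variable g : tau -> R.
Hypothesis g_mono : forall a b, 0 <= (fitR R f a - fitR R f b) * (g a - g b).

Let gap (S : st) v w := (fit S v - fit S w) * (g (S v) - g (S w)) * dinv v * dinv w.

Let gap_ge0 (S : st) v w : 0 <= gap S v w.
Proof.
apply: mulr_ge0; last exact: ltW (dinv_gt0 w).
by apply: mulr_ge0; [exact: g_mono | exact: ltW (dinv_gt0 v)].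
Qed.

Lemma drift_dsum_ge0 (S : st) : 0 <= drift (dsum g) S.
Proof.
have := drift_dsum g S; rewrite -/(gap S) => E.
have : 0 <= 2 * drift (dsum g) S.
  rewrite E; apply: divr_ge0; last exact: ltW (totfit_gt0 S).
  by apply: sumr_ge0 => v _; apply: sumr_ge0 => w _; apply: gap_ge0.
lra.
Qed.

Lemma drift_dsum_edge (S : st) u w : adj u w ->
  gap S u w / W S <= drift (dsum g) S.
Proof.
move=> auw.
have := drift_dsum g S; rewrite -/(gap S) => E.
have gap_sym : gap S w u = gap S u w by rewrite /gap; ring.
have := ler_sum_nbhd2 auw (gap_ge0 S).
have Winv_gt0 : 0 < (W S)^-1 by rewrite invr_gt0 totfit_gt0.
rewrite gap_sym -(ler_pM2r Winv_gt0) -E mulrDl.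
lra.
Qed.

End Comonotone.

Definition occ (t : tau) : st -> R := dsum (fun x => (x == t)%:R).
Definition qpot (S : st) : R := \sum_t occ t S ^+ 2.
Definition dtot : R := \sum_x dinv x.

Lemma sum_mul_indicator (F : tau -> R) a : \sum_t F t * (a == t)%:R = F a.
Proof.
rewrite (bigD1 a) //= eqxx mulr1 big1 ?addr0 // => t /negbTE.
by rewrite eq_sym => ->; rewrite mulr0.
Qed.

Lemma upd_id (S : st) v w : S v = S w -> upd S v w = S.
Proof. by move=> E; apply/ffunP => x; rewrite ffunE; case: eqP => // ->. Qed.

Lemma qpot_upd (S : st) v w : qpot (upd S v w) - qpot S =
  2 * dinv w * (occ (S v) S - occ (S w) S) + 2 * (S v != S w)%:R * dinv w ^+ 2.
Proof.
have [E|NE] := eqVneq (S v) (S w).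
  by rewrite upd_id // E !subrr /= !mulr0 mul0r addr0.
rewrite /qpot -sumrB.
pose d t : R := (S v == t)%:R - (S w == t)%:R.
have E1 t : occ t (upd S v w) ^+ 2 - occ t S ^+ 2 =
            2 * dinv w * (occ t S * d t) + dinv w ^+ 2 * (d t * d t).
  by rewrite /occ dsum_upd /d; ring.
under eq_bigr do rewrite E1.
rewrite big_split /= -!mulr_sumr.
have -> : \sum_t occ t S * d t = occ (S v) S - occ (S w) S.
  by rewrite /d; under eq_bigr do rewrite mulrBr; rewrite sumrB !sum_mul_indicator.
have -> : \sum_t d t * d t = 2.
  under eq_bigr do rewrite {2}/d mulrBr.
  by rewrite sumrB !(sum_mul_indicator d) /d !eqxx eq_sym (negbTE NE) /=; ring.
by ring.
Qed.

Lemma occ_ge0 t (S : st) : 0 <= occ t S.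
Proof. by apply: sumr_ge0 => x _; rewrite mulr_ge0 // ltW // dinv_gt0. Qed.

Lemma sum_occ (S : st) : \sum_t occ t S = dtot.
Proof.
rewrite /occ /dsum exchange_big /=; apply: eq_bigr => x _.
rewrite -mulr_suml (eq_bigr (fun t => 1 * (S x == t)%:R)) => [|t _]; last by rewrite mul1r.
by rewrite sum_mul_indicator mul1r.
Qed.

Lemma dtot_ge0 : 0 <= dtot.
Proof. by apply: sumr_ge0 => x _; rewrite ltW // dinv_gt0. Qed.

Lemma dtot_le_card : dtot <= n.
Proof.
apply: (@le_trans _ _ (\sum_(x : V) (1 : R))); last by rewrite sumr_const.
by apply: ler_sum => x _; apply: dinv_le1.
Qed.

Lemma qpot_ge0 (S : st) : 0 <= qpot S.
Proof. by apply: sumr_ge0 => t _; rewrite sqr_ge0. Qed.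

Lemma qpot_le (S : st) : qpot S <= dtot ^+ 2.
Proof.
rewrite /qpot expr2 -{1}(sum_occ S) mulr_suml; apply: ler_sum => t _.
rewrite expr2 ler_wpM2l ?occ_ge0 // -(sum_occ S) (bigD1 t) //= lerDl.
by apply: sumr_ge0 => ? _; apply: occ_ge0.
Qed.

Section Neutral.
Variable S : st.
Hypothesis fit_const : forall x y, fit S x = fit S y.

Lemma step_prob_neutral v : step_prob S v = dinv v / n.
Proof.
have fit_gt0 : 0 < fit S v by apply: lt_le_trans (fitR_ge1 _).
have W_const : W S = n * fit S v.
  rewrite /totfit (eq_bigr (fun=> fit S v)) => [|x _]; last exact: fit_const.
  by rewrite sumr_const mulr_natl.
rewrite /step_prob W_const /dinv; field.
by rewrite (lt0r_neq0 (deg_gt0 v)) (lt0r_neq0 card_gt0) (lt0r_neq0 fit_gt0).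
Qed.

(* Under neutral drift the linear part of [qpot_upd] cancels by symmetry. *)
Lemma drift_qpot_neutral : drift qpot S =
  \sum_v \sum_(w in nbhd adj v) dinv v / n * (2 * (S v != S w)%:R * dinv w ^+ 2).
Proof.
rewrite /drift.
under eq_bigr do under eq_bigr do rewrite qpot_upd step_prob_neutral mulrDr.
under eq_bigr do rewrite big_split /=.
rewrite big_split /= -[RHS]add0r; congr (_ + _).
set X := (X in X = 0).
suff : X + X = 0 by lra.
rewrite {2}/X sum_nbhd_sym /X -big_split big1 // => v _.
by rewrite -big_split big1 // => w _ /=; ring.
Qed.

Lemma drift_qpot_edge u w : adj u w -> S u != S w -> 2 / n ^+ 4 <= drift qpot S.
Proof.
move=> auw Suw; rewrite drift_qpot_neutral.
have ninv_gt0 : 0 < n^-1 by rewrite invr_gt0 card_gt0.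
apply: le_trans (ler_sum_nbhd auw _); last first.
  move=> v w'; apply: mulr_ge0; first by rewrite divr_ge0 ?ltW ?dinv_gt0 ?card_gt0.
  by rewrite !mulr_ge0 ?ler0n ?exprn_ge0 // ltW // dinv_gt0.
have -> : 2 / n ^+ 4 = n^-1 / n * (2 * n^-1 ^+ 2).
  by field; rewrite lt0r_neq0 // card_gt0.
rewrite Suw mulr1n mulr1; apply: ler_pM.
- by rewrite mulr_ge0 // ltW.
- by rewrite !mulr_ge0 ?exprn_ge0 // ltW.
- by rewrite ler_pM2r ?invr_gt0 ?card_gt0 // dinv_ge_inv_card.
- by rewrite ler_pM2l // lerXn2r ?nnegrE ?invr_ge0 ?ler0n ?dinv_ge_inv_card.
Qed.

End Neutral.

Local Notation k := (nfit f).

Definition flat (S : st) : bool := [forall x, forall y, f (S x) == f (S y)].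

Lemma flatP (S : st) : reflect (forall x y, f (S x) = f (S y)) (flat S).
Proof.
apply: (iffP forallP) => [H x y|H x]; first by move/forallP: (H x) => /(_ y) /eqP.
by apply/forallP => y; rewrite (H x y).
Qed.

Lemma flat_upd (S : st) v w : flat S -> flat (upd S v w).
Proof.
move/flatP => H; apply/flatP => x y; rewrite !ffunE.
by case: ifP => _; case: ifP => _; apply: H.
Qed.

Lemma flat_ell (S : st) x y :
  flat S -> S x != S y -> (2 <= ell f (level f (f (S x))))%N.
Proof.
move=> /flatP Sflat Sxy; apply/card_gt1P; exists (S x), (S y).
by rewrite !inE fv_level (Sflat y x) eqxx.
Qed.

Lemma not_flat_exists (S : st) : ~~ flat S -> exists x y, f (S x) < f (S y).
Proof.
move=> /flatP Snflat; apply: contrapT => Hno; apply: Snflat => x y.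
apply/eqP; rewrite eq_le !leNgt.
by apply/andP; split; apply/negP => lt; apply: Hno; [exists y, x | exists x, y].
Qed.

Lemma not_flat_level1 (S : st) :
  ~~ flat S -> (1 < k)%N /\ exists x, fv f 1 <= f (S x).
Proof.
move=> /not_flat_exists [x [y lt_xy]].
have ly_k := level_lt f (S y).
have lx_ly : (level f (f (S x)) < level f (f (S y)))%N.
  by rewrite -(@fv_ltn _ f) ?level_lt // !fv_level.
have ly_gt0 : (0 < level f (f (S y)))%N := leq_ltn_trans (leq0n _) lx_ly.
split; first exact: leq_ltn_trans ly_gt0 ly_k.
by exists y; rewrite -[f (S y)]fv_level fv_leq // (leq_ltn_trans ly_gt0 ly_k).
Qed.

Lemma top_level_edge (S : st) j0 : (j0 < k)%N -> ~~ flat S ->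
  (exists x, fv f j0 <= f (S x)) ->
  exists t u w, [/\ (j0 <= t < k)%N, (0 < t)%N, adj u w,
    forall x, f (S x) <= fv f t &
    fv f t <= f (S u) /\ f (S w) <= fv f t.-1].
Proof.
move=> j0k /not_flat_exists [x [y lt_xy]] [x1 x1_j0].
have [m _ m_max] := @arg_maxnP V x1 predT (fun z => level f (f (S z))) isT.
set t := level f (f (S m)).
have tk : (t < k)%N := level_lt f (S m).
have S_le_t z : f (S z) <= fv f t.
  by rewrite -[f (S z)]fv_level fv_leq ?level_lt //; apply: m_max.
have j0t : (j0 <= t)%N by rewrite -(fv_leq j0k tk) (le_trans x1_j0).
have m_top : fv f t <= f (S m) by rewrite fv_level.
have x_below : ~~ (fv f t <= f (S x)) by rewrite -ltNge (lt_le_trans lt_xy).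
have [u [w /and3P [auw u_top]]] :=
  connected_cut_edge (P := fun z => fv f t <= f (S z)) adj_conn m_top x_below.
rewrite /= -ltNge => w_below.
have lw_t : (level f (f (S w)) < t)%N by rewrite -(fv_ltn (level_lt _ _) tk) fv_level.
have t_gt0 : (0 < t)%N := leq_ltn_trans (leq0n _) lw_t.
exists t, u, w; split; rewrite ?j0t //; split => //.
rewrite -[f (S w)]fv_level fv_leq ?level_lt ?(leq_ltn_trans (leq_pred t) tk) //.
by rewrite -ltnS prednK.
Qed.

Definition above i (x : tau) : R := if fv f i <= f x then 1 else 0.
Definition fvR i : R := ratr (fv f i).
Definition slope i : R := fvR i / (fvR i - fvR i.-1) * n ^+ 3.

Lemma above_comonotone i a b :
  0 <= (fitR R f a - fitR R f b) * (above i a - above i b).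
Proof.
rewrite /above /fitR.
case: (leP (fv f i) (f a)) => ha; case: (leP (fv f i) (f b)) => hb;
  rewrite ?subrr ?mulr0 //.
- by rewrite subr0 mulr1 subr_ge0 ler_rat ltW // (lt_le_trans hb ha).
- by rewrite sub0r mulrN1 oppr_ge0 subr_le0 ler_rat ltW // (lt_le_trans ha hb).
Qed.

Lemma dsum_ge0 g (S : st) : (forall x, 0 <= g x) -> 0 <= dsum g S.
Proof. by move=> g_ge0; apply: sumr_ge0 => x _; rewrite mulr_ge0 // ltW // dinv_gt0. Qed.

Lemma dsum_le_dtot g (S : st) : (forall x, g x <= 1) -> dsum g S <= dtot.
Proof. by move=> g_le1; apply: ler_sum => x _; rewrite ler_piMl // ltW // dinv_gt0. Qed.

Lemma above_ge0 i x : 0 <= above i x.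
Proof. by rewrite /above; case: ifP. Qed.

Lemma above_le1 i x : above i x <= 1.
Proof. by rewrite /above; case: ifP. Qed.

Lemma fvR_ge1 i : (i < k)%N -> 1 <= fvR i.
Proof.
by move=> /fv_attained [x fx]; rewrite /fvR -fx -(rmorph1 (ratr : rat -> R)) ler_rat f_ge1.
Qed.

Lemma fvR_pred_lt i : (0 < i < k)%N -> fvR i.-1 < fvR i.
Proof.
case/andP=> i_gt0 ik; rewrite /fvR ltr_rat fv_ltn ?prednK //.
exact: ltnW.
Qed.

Lemma fvR_ratio_ge0 i : (0 < i < k)%N -> 0 <= fvR i / (fvR i - fvR i.-1).
Proof.
move=> ik; have := fvR_pred_lt ik; have := fvR_ge1 (proj2 (andP ik)).
by move=> F1 Flt; apply: divr_ge0; lra.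
Qed.

Lemma slope_ge0 i : (0 < i < k)%N -> 0 <= slope i.
Proof. by move=> ik; rewrite mulr_ge0 ?fvR_ratio_ge0 // exprn_ge0 // ltW // card_gt0. Qed.

(* The fitness gap across the edge is at least [fvR t - fvR t.-1], each
   [dinv] is at least [1/n] and the total fitness at most [n * fvR t]. *)
Lemma drift_above_top (S : st) t u w : (0 < t < k)%N -> adj u w ->
  (forall x, f (S x) <= fv f t) -> fv f t <= f (S u) -> f (S w) <= fv f t.-1 ->
  1 <= slope t * drift (dsum (above t)) S.
Proof.
move=> tk auw S_le_t u_top w_below.
have Flt := fvR_pred_lt tk.
have w_lt : f (S w) < fv f t by apply: le_lt_trans w_below _; rewrite -(ltr_rat R).
have := drift_dsum_edge (above_comonotone t) S auw.
have above_u : above t (S u) = 1 by rewrite /above u_top.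
have above_w : above t (S w) = 0 by rewrite /above leNgt w_lt.
rewrite above_u above_w subr0 mulr1 => drift_ge.
set D := fvR t - fvR t.-1.
have D_gt0 : 0 < D by rewrite subr_gt0.
have gap_ge : D <= fit S u - fit S w by rewrite lerB // ler_rat.
have W_le : W S <= n * fvR t.
  apply: (@le_trans _ _ (\sum_(x : V) fvR t)); last by rewrite sumr_const mulr_natl.
  by apply: ler_sum => x _; rewrite /fitR ler_rat.
have dinv_n x : 1 <= dinv x * n.
  by rewrite -ler_pdivrMr ?card_gt0 // div1r dinv_ge_inv_card.
apply: le_trans (ler_wpM2l (slope_ge0 tk) drift_ge).
have -> : slope t * ((fit S u - fit S w) * dinv u * dinv w / W S) =
   (fit S u - fit S w) * (dinv u * n) * (dinv w * n) * (n * fvR t) / (D * W S).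
  by rewrite /slope -/D; field; rewrite (lt0r_neq0 D_gt0) (lt0r_neq0 (totfit_gt0 S)).
rewrite ler_pdivlMr ?mulr_gt0 ?totfit_gt0 // mul1r.
have -> : D * W S = D * 1 * 1 * W S by ring.
apply: ler_pM; [by rewrite !mulr1 ltW | exact: ltW (totfit_gt0 S) | | exact: W_le].
apply: ler_pM; [by rewrite mulr1 ltW | by [] | | exact: dinv_n].
by apply: ler_pM; [exact: ltW | by [] | exact: gap_ge | exact: dinv_n].
Qed.

Definition neutral_pot (S : st) : R := n ^+ 4 / 2 * (dtot ^+ 2 - qpot S).
Definition level_pot j0 (S : st) : R :=
  \sum_(j0 <= i < k) slope i * (dtot - dsum (above i) S).
(* [C] records whether flat but unabsorbed states can occur; if not, the
   neutral phase contributes nothing to the potential. *)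
Definition pot (C : bool) j0 (S : st) : R :=
  if flat S then C%:R * neutral_pot S else C%:R * (n ^+ 6 / 2) + level_pot j0 S.

Lemma neutral_pot_ge0 (S : st) : 0 <= neutral_pot S.
Proof.
by rewrite mulr_ge0 ?subr_ge0 ?qpot_le // divr_ge0 // exprn_ge0 // ltW // card_gt0.
Qed.

Lemma neutral_pot_le (S : st) : neutral_pot S <= n ^+ 6 / 2.
Proof.
have n4_ge0 : 0 <= n ^+ 4 / 2 by rewrite divr_ge0 // exprn_ge0 // ltW // card_gt0.
apply: (@le_trans _ _ (n ^+ 4 / 2 * n ^+ 2)); last by rewrite mulrAC -exprD.
rewrite ler_wpM2l // lerBlDr (@le_trans _ _ (n ^+ 2)) ?lerDl ?qpot_ge0 //.
by rewrite lerXn2r ?nnegrE ?dtot_ge0 ?dtot_le_card // ltW // card_gt0.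
Qed.

Lemma level_pot_ge0 j0 (S : st) : (0 < j0)%N -> 0 <= level_pot j0 S.
Proof.
move=> j0_gt0; rewrite /level_pot big_seq.
apply: sumr_ge0 => i; rewrite mem_index_iota.
case/andP=> j0i ik; rewrite mulr_ge0 ?slope_ge0 ?ik ?(leq_trans j0_gt0 j0i) //.
by rewrite subr_ge0 dsum_le_dtot // => x; apply: above_le1.
Qed.

Lemma level_pot_le j0 (S : st) : (0 < j0)%N ->
  level_pot j0 S <= \sum_(j0 <= i < k) slope i * dtot.
Proof.
move=> j0_gt0; apply: ler_sum_nat => i /andP [j0i ik].
rewrite ler_wpM2l ?slope_ge0 ?ik ?(leq_trans j0_gt0 j0i) //.
by rewrite lerBlDr lerDl dsum_ge0 // => x; apply: above_ge0.
Qed.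

Lemma pot_ge0 C j0 (S : st) : (0 < j0)%N -> 0 <= pot C j0 S.
Proof.
move=> j0_gt0; rewrite /pot; case: flat; first by rewrite mulr_ge0 ?neutral_pot_ge0.
by rewrite addr_ge0 ?level_pot_ge0 // mulr_ge0 // divr_ge0 //
  exprn_ge0 // ltW // card_gt0.
Qed.

Lemma pot_le C j0 (S : st) : (0 < j0)%N ->
  pot C j0 S <= C%:R * (n ^+ 6 / 2) + level_pot j0 S.
Proof.
move=> j0_gt0; rewrite /pot; case: flat => //.
by rewrite -[X in X <= _]addr0 lerD ?level_pot_ge0 // ler_wpM2l ?neutral_pot_le.
Qed.

Lemma drift_level_pot j0 (S : st) :
  drift (level_pot j0) S = - \sum_(j0 <= i < k) slope i * drift (dsum (above i)) S.
Proof.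
rewrite drift_sum -sumrN; apply: eq_bigr => i _.
rewrite (@eq_drift _ (fun S' => -1 * dsum (above i) S' + dtot)) => [|S']; last by ring.
by rewrite driftZD; ring.
Qed.

Lemma next_mean_pot_flat j0 (S : st) : flat S -> (exists x y, S x != S y) ->
  next_mean (pot true j0) S <= pot true j0 S - 1.
Proof.
move=> Sflat [x [y Sxy]].
have fit_const a b : fit S a = fit S b.
  by move/flatP: Sflat => /(_ a b); rewrite /fitR => ->.
have y_out : ~~ (S y == S x) by rewrite eq_sym.
have [u [w /and3P [auw /eqP Su_x Sw_x]]] :=
  connected_cut_edge (P := fun z => S z == S x) adj_conn (eqxx (S x)) y_out.
have Suw : S u != S w by rewrite Su_x eq_sym.
apply: le_trans (@ler_next_mean _ neutral_pot _ _) _.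
  by move=> v w'; rewrite /pot flat_upd // mul1r.
set c := n ^+ 4 / 2.
rewrite next_meanE /pot Sflat mul1r.
rewrite (@eq_drift _ (fun S' => - c * qpot S' + c * dtot ^+ 2)) => [|S']; last first.
  by rewrite /neutral_pot /c; ring.
have c_inv : c * (2 / n ^+ 4) = 1 by rewrite /c; field; rewrite lt0r_neq0 // card_gt0.
have : 1 <= c * drift qpot S.
  rewrite -c_inv ler_wpM2l ?(drift_qpot_edge fit_const auw Suw) //.
  by rewrite divr_ge0 // exprn_ge0 // ltW // card_gt0.
by rewrite driftZD mulNr; lra.
Qed.

Lemma next_mean_pot_mixed C j0 (S : st) : (0 < j0)%N -> (j0 < k)%N -> ~~ flat S ->
  (exists x, fv f j0 <= f (S x)) -> next_mean (pot C j0) S <= pot C j0 S - 1.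
Proof.
move=> j0_gt0 j0k Snflat S_j0.
apply: le_trans
  (@ler_next_mean _ (fun S' => 1 * level_pot j0 S' + C%:R * (n ^+ 6 / 2)) _ _) _.
  by move=> v w; rewrite mul1r addrC pot_le.
rewrite next_meanE driftZD mul1r drift_level_pot /pot (negbTE Snflat).
have [t [u [w [/andP [j0t tk] t_gt0 auw S_le_t [u_top w_below]]]]] :=
  top_level_edge j0k Snflat S_j0.
suff : 1 <= \sum_(j0 <= i < k) slope i * drift (dsum (above i)) S by lra.
apply: le_trans (drift_above_top _ auw S_le_t u_top w_below) _; first by rewrite t_gt0.
rewrite (bigD1_seq t) /= ?mem_index_iota ?j0t ?iota_uniq // lerDl.
rewrite big_seq_cond; apply: sumr_ge0 => i /andP [].
rewrite mem_index_iota => /andP [j0i ik] _.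
rewrite mulr_ge0 ?slope_ge0 ?ik ?(leq_trans j0_gt0 j0i) //.
exact: drift_dsum_ge0 (above_comonotone i) S.
Qed.

Lemma exp_hit_le_levels (T : pred st) j0 (C : bool) (M0 : st) : (0 < j0)%N ->
  (forall S, ~~ T S -> flat S -> C /\ exists x y, S x != S y) ->
  (forall S, ~~ T S -> ~~ flat S -> (j0 < k)%N /\ exists x, fv f j0 <= f (S x)) ->
  (exp_hit R adj f T M0 <=
     (C%:R * (n ^+ 6 / 2) + \sum_(j0 <= i < k) slope i * dtot)%:E)%E.
Proof.
move=> j0_gt0 T_flat T_mixed.
apply: le_trans (exp_hit_le_potential f_ge0 (P := pot C j0) M0 _ _) _.
- by move=> S; apply: pot_ge0.
- move=> S nTS; have [Sflat|Snflat] := boolP (flat S).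
    by have [-> S_nonconst] := T_flat S nTS Sflat; apply: next_mean_pot_flat.
  by have [j0k S_j0] := T_mixed S nTS Snflat; apply: next_mean_pot_mixed.
- by rewrite lee_fin (le_trans (pot_le C M0 j0_gt0)) // lerD2l level_pot_le.
Qed.

Definition fitness_gap_sum j0 : R :=
  \sum_(j0 <= i < k) fvR i / (fvR i - fvR i.-1) * (n + 1) * n ^+ 3.

Lemma levels_bound_le j0 (C : bool) (e : nat) :
  (0 < j0)%N -> (C -> 2 <= e)%N -> (1 <= e)%N ->
  C%:R * (n ^+ 6 / 2) + \sum_(j0 <= i < k) slope i * dtot <=
  (e%:R - 1) * n ^+ 6 + fitness_gap_sum j0.
Proof.
move=> j0_gt0 C_e e_ge1.
have n6_ge0 : 0 <= n ^+ 6 by rewrite exprn_ge0 // ltW // card_gt0.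
apply: lerD.
  case: C C_e => [/(_ isT) e_ge2|_]; last by rewrite mul0r mulr_ge0 // subr_ge0 ler1n.
  have e1 : 1 <= (e%:R : R) - 1 by rewrite lerBrDr (ler_nat R 2 e).
  by rewrite mul1r (@le_trans _ _ (n ^+ 6)) ?ler_peMl //; lra.
apply: ler_sum_nat => i /andP [j0i ik].
rewrite /slope mulrAC; apply: ler_wpM2r; first by rewrite exprn_ge0 // ltW // card_gt0.
apply: ler_wpM2l; first by rewrite fvR_ratio_ge0 // ik (leq_trans j0_gt0 j0i).
by rewrite (le_trans dtot_le_card) // lerDl.
Qed.

Lemma absA_le (M0 : st) :
  (absA R adj f M0 <= (((ellmax f)%:R - 1) * n ^+ 6 + fitness_gap_sum 1)%:E)%E.
Proof.
have [v0 _] := card_gt0P (ltnW card_V_gt1).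
have ell_max_ge1 : (1 <= ellmax f)%N.
  exact: leq_trans (ell_gt0 (level_lt f (M0 v0))) (ell_le_max (level_lt f (M0 v0))).
apply: le_trans (@exp_hit_le_levels _ 1 (2 <= ellmax f)%N M0 isT _ _) _.
- move=> S /existsPn /(_ (S v0)) /forallPn [y Sy] Sflat; split; last by exists y, v0.
  exact: leq_trans (flat_ell Sflat Sy) (ell_le_max (level_lt _ _)).
- by move=> S _ Snflat; apply: not_flat_level1.
- by rewrite lee_fin levels_bound_le.
Qed.

Lemma not_type_abs (S : st) beta :
  ~~ type_abs beta S -> exists x y, S x = beta /\ S y != beta.
Proof.
rewrite /type_abs negb_or => /andP [/forallPn [y Sy] /forallPn [x /negPn /eqP Sx]].
by exists x, y.
Qed.

Lemma absAj_le beta j0 (M0 : st) : (0 < j0)%N ->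
  (j0 <= level f (f beta))%N \/ j0 = 1%N ->
  (absAj R adj f beta M0 <=
     (((ell f (level f (f beta)))%:R - 1) * n ^+ 6 + fitness_gap_sum j0)%:E)%E.
Proof.
move=> j0_gt0 j0_beta.
apply: le_trans (@exp_hit_le_levels _ j0 (2 <= ell f (level f (f beta)))%N M0 j0_gt0 _ _) _.
- move=> S /not_type_abs [x [y [Sx Sy]]] Sflat.
  have Sxy : S x != S y by rewrite Sx eq_sym.
  by split; [rewrite -Sx (flat_ell Sflat Sxy) | exists x, y].
- move=> S /not_type_abs [x [_ [Sx _]]] Snflat.
  case: j0_beta => [j0_le|->]; last exact: not_flat_level1.
  have j0k := leq_ltn_trans j0_le (level_lt f beta).
  by split => //; exists x; rewrite Sx -[f beta]fv_level fv_leq // level_lt.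
- by rewrite lee_fin levels_bound_le // ell_gt0 // level_lt.
Qed.

End Moran.

Lemma in_Omega0_card_le (V tau : finType) (M0 : {ffun V -> tau}) :
  in_Omega0 M0 -> (#|tau| <= #|V|)%N.
Proof.
move=> M0_onto.
have preimage j : exists v, M0 v == j by have [v <-] := M0_onto j; exists v.
have gK : cancel (fun j => xchoose (preimage j)) M0.
  by move=> j; apply/eqP; exact: (xchooseP (preimage j)).
exact: leq_card (can_inj gK).
Qed.

Unset Implicit Arguments.

Theorem theorem18 (R : realType) (V tau : finType) (adj : rel V) (f : tau -> rat)
  (M0 : {ffun V -> tau}) :
  simple_graph adj -> connected_graph adj ->
  (1 < #|tau|)%N ->
  (forall x, 1 <= f x) ->
  in_Omega0 M0 ->
  let n : R := (#|V|)%:R in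
  let k := nfit f in
  let F i : R := ratr (fv f i) in
  let S j : R := \sum_(j <= i < k) F i / (F i - F i.-1) * (n + 1) * n ^+ 3 in
  [/\ (absA R adj f M0 <= (((ellmax f)%:R - 1) * n ^+ 6 + S 1%N)%:E)%E,
      (forall (j : nat) (beta : tau), (1 <= j < k)%N -> f beta = fv f j ->
         (absAj R adj f beta M0 <= (((ell f j)%:R - 1) * n ^+ 6 + S j)%:E)%E) &
      (forall beta : tau, f beta = fv f 0 ->
         (absAj R adj f beta M0 <= (((ell f 0)%:R - 1) * n ^+ 6 + S 1%N)%:E)%E)].
Proof.
move=> [adj_sym adj_irr] adj_conn tau_gt1 f_ge1 M0_onto n k F S.
have card_V_gt1 : (1 < #|V|)%N := leq_trans tau_gt1 (in_Omega0_card_le M0_onto).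
have absAj_bound := @absAj_le R _ _ _ _ f_ge1 adj_sym adj_irr adj_conn card_V_gt1.
split.
- exact: absA_le.
- move=> j beta /andP [j_gt0 jk] fb.
  have := absAj_bound beta j M0 j_gt0.
  by rewrite fb level_fv // => /(_ (or_introl (leqnn j))).
- move=> beta fb.
  have k_gt0 : (0 < k)%N := leq_ltn_trans (leq0n _) (level_lt f beta).
  have := absAj_bound beta 1%N M0 (ltn0Sn 0).
  by rewrite fb level_fv // => /(_ (or_intror erefl)).
Qed.
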